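(* There is an absolute constant $c>0$ such that for any $n>16$, any $\eta>0$, and any estimator $\hat\pi$ mapping $n$ i.i.d. action-reward pairs to a distribution in $\Delta(\mathcal A)$, $$\sup_{(\mathcal A,r,\pi^{\mathrm{ref}})\in\mathrm{MAB}_2}\ \mathbb E_{\mathcal D\sim P_{\pi^{\mathrm{ref}},r}}\big[\mathrm{SubOpt}(\hat\pi;\mathcal A,r,\pi^{\mathrm{ref}})\big]\ \ge\ c\,\Big(\frac{\eta}{n}\wedge\frac{1}{\sqrt n}\Big).$$
   Context: $\mathrm{MAB}_2$ denotes the class of offline two-armed bandits: action set $\mathcal A$ with $|\mathcal A|=2$ (single context), mean reward $r:\mathcal A\to[0,1]$, reference (behavior) policy $\pi^{\mathrm{ref}}\in\Delta(\mathcal A)$ with full support. The dataset $\mathcal D\sim P_{\pi^{\mathrm{ref}},r}$ consists of $n$ i.i.d. pairs $(a_i,r_i)$ with $a_i\sim\pi^{\mathrm{ref}}$ and $r_i=r(a_i)+\varepsilon_i$ with mean-zero $1$-subgaussian noise. For $\eta>0$, $J(\pi)=\sum_a r(a)\pi(a)-\eta^{-1}\mathrm{KL}(\pi^{\mathrm{ref}}\|\pi)$, $\pi^*=\arg\max_{\pi\in\Delta(\mathcal A)}J(\pi)$, $\mathrm{SubOpt}(\pi;\mathcal A,r,\pi^{\mathrm{ref}})=J(\pi^* )-J(\pi)$. *)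

From mathcomp Require Import all_boot all_order all_algebra.
From mathcomp Require Import all_classical all_reals all_analysis.
Set Implicit Arguments. Unset Strict Implicit. Unset Printing Implicit Defensive.
Import Order.TTheory GRing.Theory Num.Theory.
Local Open Scope classical_set_scope.
Local Open Scope ring_scope.

(* The action set A with |A| = 2 is represented by [bool]. *)

Definition is_dist (R : realType) (p : bool -> R) : Prop :=
  (forall a, 0 <= p a) /\ p true + p false = 1.

Definition KLterm (R : realType) (pa qa : R) : \bar R :=
  if pa == 0 then 0%E
  else if qa == 0 then +oo%E
  else (pa * ln (pa / qa))%:E.

Definition KL (R : realType) (p q : bool -> R) : \bar R :=
  (\sum_(a : bool) KLterm (p a) (q a))%E.

Definition Jobj (R : realType) (eta : R) (r pref pi : bool -> R) : \bar R :=
  ((\sum_(a : bool) r a * pi a)%:E - (eta^-1)%:E * KL pref pi)%E.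

Definition Jopt (R : realType) (eta : R) (r pref : bool -> R) : \bar R :=
  ereal_sup [set Jobj eta r pref pi | pi in [set pi | is_dist pi]].

Definition SubOpt (R : realType) (eta : R) (r pref pi : bool -> R) : \bar R :=
  (Jopt eta r pref - Jobj eta r pref pi)%E.

(* Expectation of f(D) when D = ((a_1,r_1),...,(a_k,r_k)) has i.i.d. entries,
   a_i ~ pref and r_i = r(a_i) + eps_i with eps_i ~ nu independent of a_i. *)
Fixpoint Edata (R : realType) (r pref : bool -> R) (nu : probability R R)
    (k : nat) : (k.-tuple (bool * R) -> \bar R) -> \bar R :=
  match k with
  | 0 => fun f => f [tuple]
  | k'.+1 => fun f =>
      (\sum_(a : bool) (pref a)%:E *
         \int[nu]_e Edata r pref nu (fun t : k'.-tuple (bool * R) =>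
                                        f (cons_tuple (a, (r a + e)%R) t)))%E
  end.

Definition subgaussian_noise (R : realType) (nu : probability R R) : Prop :=
  nu.-integrable setT (fun x : R => x%:E) /\
  (\int[nu]_x x%:E = 0)%E /\
  forall lam : R, (\int[nu]_x (expR (lam * x))%:E <= (expR (lam ^+ 2 / 2))%:E)%E.

Definition MAB2 (R : realType) (r pref : bool -> R) (nu : probability R R) : Prop :=
  (forall a, 0 <= r a <= 1) /\ is_dist pref /\ (forall a, 0 < pref a) /\
  subgaussian_noise nu.

Definition worst_risk (R : realType) (n : nat) (eta : R)
    (pihat : n.-tuple (bool * R) -> bool -> R) : \bar R :=
  ereal_sup [set x | exists (r pref : bool -> R) (nu : probability R R),
     MAB2 r pref nu /\
     x = Edata r pref nu (fun D => SubOpt eta r pref (pihat D))].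

From mathcomp Require Import all_boot all_order all_algebra.
From mathcomp Require Import all_classical all_reals all_analysis.
From mathcomp Require Import measurable_realfun.
From mathcomp Require Import ring lra.
Import Order.TTheory GRing.Theory Num.Theory.
Import HBNNSimple.
Local Open Scope classical_set_scope.
Local Open Scope ring_scope.
Set Implicit Arguments. Unset Strict Implicit.

(* Le Cam's two-point method.  Take noiseless rewards, the reference policy
   (p, 1 - p) with p = 1/(2n), and the mean rewards (1, 1/2) and (0, 1/2).  With
   probability (1 - p)^n >= 1/2 every sample is the second action with reward 1/2, so
   the estimator returns the same policy (x, 1 - x) in both instances.  For any
   y in (p, 1), comparing with (y, 1 - y) in the first instance and with (p, 1 - p) in
   the second shows that the two suboptimalities add up to at least
   (y - p)/2 - eta^-1 chi2(p, y), because the Bernoulli KL divergence lies between 0 and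
   the chi-square divergence.  Taking y - p = p eta/16 when eta <= 16 and y - p = 1/4
   otherwise gives a risk of order min(eta/n, 1), which dominates min(eta/n, 1/sqrt n). *)

Section dirac_integral.
Variables (R : realType) (g : R -> \bar R) (a : R).
Hypothesis g_ge0 : forall x, (0 <= g x)%E.

(* No measurability of [g] is needed: [c * 1_{a}] is a simple function below [g]. *)
Let le_integral_dirac_fin (c : R) : 0 <= c -> (c%:E <= g a)%E ->
  (c%:E <= \int[\d_a]_x g x)%E.
Proof.
move=> c0 cga; pose h := scale_nnsfun (indic_nnsfun R (measurable_set1 a)) c0.
rewrite ge0_integralE //; apply: ereal_sup_ubound; exists h.
  move=> x /=; rewrite patch_setT /= mindicE.
  have [->|xa] := eqVneq x a; first by rewrite mem_set // mulr1.
  by rewrite memNset ?mulr0 // => /= xa'; move: xa; rewrite xa' eqxx.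
rewrite -integralT_nnsfun integral_dirac //; last first.
  exact/measurable_EFinP/measurable_funP.
by rewrite diracT mul1e /= mindicE mem_set // mulr1.
Qed.

Lemma le_integral_dirac : (g a <= \int[\d_a]_x g x)%E.
Proof.
case ga: (g a) => [c| |]; last by move: (g_ge0 a); rewrite ga.
  by apply: le_integral_dirac_fin; rewrite -?lee_fin -ga.
rewrite leye_eq; apply/eqP/eq_infty => c.
have [c0|c0] := leP 0 c; first by apply: le_integral_dirac_fin; rewrite ?ga ?leey.
by apply: le_trans (integral_ge0 _ _); rewrite ?lee_fin ?ltW.
Qed.

End dirac_integral.

Lemma subgaussian_dirac0 (R : realType) : subgaussian_noise (\d_(0 : R)).
Proof.
have mEFin : measurable_fun setT (fun x : R => x%:E).
  exact/measurable_EFinP/measurable_id.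
split; [|split].
- apply/integrableP; split => //.
  rewrite integral_dirac //; first by rewrite diracT mul1e /= normr0 ltry.
  apply/measurable_EFinP; apply: continuous_measurable_fun; exact: norm_continuous.
- by rewrite integral_dirac // diracT mul1e.
- move=> lam; rewrite integral_dirac //.
    rewrite diracT mul1e mulr0 expR0 lee_fin -expR0 ler_expR.
    by rewrite divr_ge0 ?sqr_ge0.
  apply/measurable_EFinP/measurableT_comp; [exact: measurable_expR | exact: mulrl_measurable].
Qed.

Section Edata_lower_bound.
Variables (R : realType) (r pref : bool -> R).
Hypothesis pref_ge0 : forall a, 0 <= pref a.

Lemma Edata_ge0 (nu : probability R R) (k : nat) (f : k.-tuple (bool * R) -> \bar R) :
  (forall t, (0 <= f t)%E) -> (0 <= Edata r pref nu f)%E.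
Proof.
elim: k f => [|k IH] f f_ge0 /=; first exact: f_ge0.
apply: sume_ge0 => a _; apply: mule_ge0; first by rewrite lee_fin.
by apply: integral_ge0 => e _; exact: IH.
Qed.

Lemma Edata_dirac0_ge (a : bool) (k : nat) (f : k.-tuple (bool * R) -> \bar R) :
  (forall t, (0 <= f t)%E) ->
  ((pref a ^+ k)%:E * f (nseq_tuple k (a, r a)) <= Edata r pref \d_(0%R : R) f)%E.
Proof.
elim: k f => [|k IH] f f_ge0 /=.
  by rewrite expr0 mul1e (_ : nseq_tuple 0 _ = [tuple]) //; exact: val_inj.
rewrite (bigD1 a) //= -[X in (X <= _)%E]adde0; apply: leeD; last first.
  apply: sume_ge0 => b _; apply: mule_ge0; first by rewrite lee_fin.
  by apply: integral_ge0 => e _; exact: Edata_ge0.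
rewrite exprS EFinM -muleA; apply: lee_wpmul2l; first by rewrite lee_fin.
set g := fun e => Edata r pref \d_(0%R : R) (fun t => f (cons_tuple (a, r a + e) t)).
apply: le_trans (@le_integral_dirac R g 0 (fun e => Edata_ge0 _ (fun t => f_ge0 _))).
have -> : nseq_tuple k.+1 (a, r a) = cons_tuple (a, r a + 0) (nseq_tuple k (a, r a)).
  by apply: val_inj; rewrite /= addr0.
exact: (IH (fun t => f (cons_tuple (a, r a + 0) t))).
Qed.

End Edata_lower_bound.

Lemma bernoulli_ineq (R : realDomainType) (x : R) (n : nat) :
  -1 <= x -> 1 + x *+ n <= (1 + x) ^+ n.
Proof.
move=> x_ge; elim: n => [|n IH]; first by rewrite mulr0n addr0 expr0.
have x2 : 0 <= x ^+ 2 *+ n by rewrite mulrn_wge0 ?sqr_ge0.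
rewrite exprS mulrSr; apply: le_trans (_ : (1 + x) * (1 + x *+ n) <= _).
  by move: x2; rewrite expr2 -mulrnAr; nra.
by rewrite ler_wpM2l //; lra.
Qed.

Section log_inequalities.
Variable R : realType.
Implicit Types a b z : R.

Lemma ln_le_subr1 z : 0 < z -> ln z <= z - 1.
Proof. by move=> z0; have := @le_ln1Dx R (z - 1); rewrite subrKC; apply; lra. Qed.

Lemma mul_ln_div_le a b : 0 < a -> 0 < b -> a * ln (a / b) <= a * (a / b - 1).
Proof. by move=> a0 b0; rewrite ler_pM2l // ln_le_subr1 // divr_gt0. Qed.

Lemma mul_ln_div_ge a b : 0 < a -> 0 < b -> a - b <= a * ln (a / b).
Proof.
move=> a0 b0; rewrite -invf_div lnV ?posrE ?divr_gt0 // mulrN.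
have : a * ln (b / a) <= a * (b / a - 1) by rewrite ler_pM2l // ln_le_subr1 // divr_gt0.
have -> : a * (b / a - 1) = b - a by field; rewrite gt_eqF.
lra.
Qed.

End log_inequalities.

Section bernoulli_divergences.
Variable R : realType.
Implicit Types p q : R.

Definition bernoulli_kl p q : R :=
  p * ln (p / q) + (1 - p) * ln ((1 - p) / (1 - q)).

Definition bernoulli_chi2 p q : R := (q - p) ^+ 2 / (q * (1 - q)).

Lemma bernoulli_klxx p : bernoulli_kl p p = 0.
Proof.
have xlnxx (x : R) : x * ln (x / x) = 0.
  by have [->|x0] := eqVneq x 0; rewrite ?mul0r // divff // ln1 mulr0.
by rewrite /bernoulli_kl !xlnxx addr0.
Qed.

Variables p q : R.
Hypotheses (p01 : 0 < p < 1) (q01 : 0 < q < 1).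

Lemma bernoulli_kl_ge0 : 0 <= bernoulli_kl p q.
Proof.
case/andP: p01 => p0 p1; case/andP: q01 => q0 q1.
have := mul_ln_div_ge p0 q0; have := @mul_ln_div_ge R (1 - p) (1 - q).
rewrite /bernoulli_kl !subr_gt0 => /(_ p1 q1); lra.
Qed.

Lemma bernoulli_kl_le_chi2 : bernoulli_kl p q <= bernoulli_chi2 p q.
Proof.
case/andP: p01 => p0 p1; case/andP: q01 => q0 q1.
have := mul_ln_div_le p0 q0; have := @mul_ln_div_le R (1 - p) (1 - q).
have -> : bernoulli_chi2 p q = p * (p / q - 1) + (1 - p) * ((1 - p) / (1 - q) - 1).
  by rewrite /bernoulli_chi2; field; rewrite !gt_eqF ?subr_gt0.
rewrite /bernoulli_kl !subr_gt0 => /(_ p1 q1); lra.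
Qed.

End bernoulli_divergences.

Lemma is_dist_bernoulli_pmf (R : realType) (p : R) :
  0 <= p <= 1 -> is_dist (bernoulli_pmf p).
Proof. by move=> p01; split=> [a|]; [exact: bernoulli_pmf_ge0 | rewrite /= subrKC]. Qed.

Lemma bernoulli_pmf_gt0 (R : realType) (x : R) :
  0 < x < 1 -> forall a, 0 < bernoulli_pmf x a.
Proof. by move=> /andP[x0 x1] [] /=; lra. Qed.

Lemma is_distE (R : realType) (q : bool -> R) :
  is_dist q -> q = bernoulli_pmf (q true) /\ 0 <= q true <= 1.
Proof.
move=> [q_ge0 q1]; have := q_ge0 true; have := q_ge0 false; split.
  by apply/funext => -[] //=; lra.
by apply/andP; split; lra.
Qed.

Lemma Jobj_ninfty (R : realType) (eta : R) (r pref q : bool -> R) (a : bool) :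
  0 < eta -> (forall a, 0 < pref a) -> q a = 0 -> Jobj eta r pref q = -oo%E.
Proof.
move=> eta_gt0 pref_gt0 qa0; rewrite /Jobj.
have -> : KL pref q = +oo%E.
  rewrite /KL (bigD1 a) //= /KLterm gt_eqF // qa0 eqxx addye //.
  rewrite esum_eqNy; apply/existsP => -[b]; rewrite /KLterm.
  by case: (pref b == 0); case: (q b == 0); rewrite andbF.
by rewrite mulry gtr0_sg ?invr_gt0 // mul1e.
Qed.

Section bernoulli_objective.
Variables (R : realType) (eta p : R) (r : bool -> R).
Hypotheses (eta_gt0 : 0 < eta) (p01 : 0 < p < 1).

Local Notation J := (Jobj eta r (bernoulli_pmf p)).
Local Notation Jstar := (Jopt eta r (bernoulli_pmf p)).
Local Notation subopt := (SubOpt eta r (bernoulli_pmf p)).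

Lemma Jobj_bernoulli (x : R) : 0 < x < 1 ->
  J (bernoulli_pmf x) = (r true * x + r false * (1 - x) - eta^-1 * bernoulli_kl p x)%:E.
Proof.
move=> x01; have p_gt0 := bernoulli_pmf_gt0 p01; have x_gt0 := bernoulli_pmf_gt0 x01.
by rewrite /Jobj /KL !big_bool /KLterm !gt_eqF.
Qed.

Lemma Jopt_ge (q : bool -> R) : is_dist q -> (J q <= Jstar)%E.
Proof. by move=> dq; apply: ereal_sup_ubound; exists q. Qed.

Lemma Jopt_gt_ninfty : (-oo < Jstar)%E.
Proof.
have dp : is_dist (bernoulli_pmf p) by apply: is_dist_bernoulli_pmf; case/andP: p01; lra.
by apply: lt_le_trans (Jopt_ge dp); rewrite Jobj_bernoulli // ltNyr.
Qed.

Lemma SubOpt_pinfty (q : bool -> R) (a : bool) : q a = 0 -> subopt q = +oo%E.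
Proof.
move=> qa0; rewrite /SubOpt (Jobj_ninfty r eta_gt0 (bernoulli_pmf_gt0 p01) qa0).
by rewrite addey // gt_eqF // Jopt_gt_ninfty.
Qed.

Lemma SubOpt_ge0 (q : bool -> R) : is_dist q -> (0 <= subopt q)%E.
Proof.
move=> dq; have [qE /andP[q0 q1]] := is_distE dq.
have [q01|] := boolP (0 < q true < 1).
  rewrite /SubOpt sube_ge0 ?Jopt_ge // qE Jobj_bernoulli //.
rewrite negb_and -!leNgt => /orP[q_le0|q_ge1].
  by rewrite (@SubOpt_pinfty q true) //; apply/le_anti; rewrite q_le0.
by rewrite (@SubOpt_pinfty q false) // qE /=; lra.
Qed.

Lemma SubOpt_bernoulli_ge (x y : R) : 0 < x < 1 -> 0 < y < 1 ->
  (((r true - r false) * (y - x) - eta^-1 * (bernoulli_kl p y - bernoulli_kl p x))%:E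
    <= subopt (bernoulli_pmf x))%E.
Proof.
move=> x01 y01; have dy : is_dist (bernoulli_pmf y).
  by apply: is_dist_bernoulli_pmf; case/andP: y01; lra.
apply: le_trans (leeB (Jopt_ge dy) (lexx _)).
rewrite !Jobj_bernoulli // -EFinB lee_fin; lra.
Qed.

End bernoulli_objective.

Section two_point.
Variable R : realType.

Definition two_point_reward (b : bool) : bool -> R :=
  fun a => if a then (if b then 1 else 0) else 2^-1.

Definition two_point_gap (eta p y : R) : R := (y - p) / 2 - eta^-1 * bernoulli_chi2 p y.

Lemma MAB2_two_point (b : bool) (p : R) : 0 < p < 1 ->
  MAB2 (two_point_reward b) (bernoulli_pmf p) \d_(0 : R).
Proof.
move=> p01; split; [|split; [|split]].
- by case: b => -[] /=; apply/andP; split; lra.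
- by apply: is_dist_bernoulli_pmf; case/andP: p01; lra.
- exact: bernoulli_pmf_gt0.
- exact: subgaussian_dirac0.
Qed.

Variables (eta p : R).
Hypotheses (eta_gt0 : 0 < eta) (p01 : 0 < p < 1).

Local Notation subopt b := (SubOpt eta (two_point_reward b) (bernoulli_pmf p)).

Lemma SubOpt_two_point_ge (x y : R) : 0 <= x <= 1 -> p < y < 1 ->
  ((two_point_gap eta p y)%:E <=
     subopt true (bernoulli_pmf x) + subopt false (bernoulli_pmf x))%E.
Proof.
move=> x01 /andP[py y1]; have y01 : 0 < y < 1 by apply/andP; case/andP: p01; lra.
have [x_in01|x_bd] := boolP (0 < x < 1).
  apply: le_trans (leeD (SubOpt_bernoulli_ge eta _ p01 x_in01 y01)
                        (SubOpt_bernoulli_ge eta _ p01 x_in01 p01)).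
  rewrite -EFinD lee_fin /= bernoulli_klxx /two_point_gap.
  have := bernoulli_kl_ge0 p01 x_in01; have := bernoulli_kl_le_chi2 p01 y01.
  have : 0 < eta^-1 by rewrite invr_gt0.
  nra.
have Strue : subopt true (bernoulli_pmf x) = +oo%E.
  move: x_bd; rewrite negb_and -!leNgt => /orP[x_le0|x_ge1].
    by apply: (SubOpt_pinfty _ eta_gt0 p01 (a := true)) => /=; case/andP: x01; lra.
  by apply: (SubOpt_pinfty _ eta_gt0 p01 (a := false)) => /=; case/andP: x01; lra.
rewrite Strue addye ?leey // gt_eqF //.
exact: lt_le_trans ltNy0 (SubOpt_ge0 _ eta_gt0 p01 (is_dist_bernoulli_pmf x01)).
Qed.

Lemma SubOpt_two_point_ge_half (x y : R) : 0 <= x <= 1 -> p < y < 1 ->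
  exists b, ((two_point_gap eta p y / 2)%:E <= subopt b (bernoulli_pmf x))%E.
Proof.
move=> x01 y_gt; have sum_ge := SubOpt_two_point_ge x01 y_gt.
set G := two_point_gap eta p y in sum_ge *.
have [Strue|Strue] := leP (G / 2)%:E (subopt true (bernoulli_pmf x)); first by exists true.
exists false; rewrite leNgt; apply/negP => Sfalse.
by have := le_lt_trans sum_ge (lteD Strue Sfalse); rewrite -EFinD -splitr ltxx.
Qed.

Lemma worst_risk_ge_two_point (n : nat) (y : R) (pihat : n.-tuple (bool * R) -> bool -> R) :
  p < y < 1 -> 2^-1 <= (1 - p) ^+ n -> 0 <= two_point_gap eta p y ->
  (forall D, is_dist (pihat D)) ->
  ((two_point_gap eta p y / 4)%:E <= worst_risk eta pihat)%E.
Proof.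
move=> y_gt Pn G_ge0 pihat_dist.
set D0 := nseq_tuple n (false, 2^-1 : R).
have [pihatE x01] := is_distE (pihat_dist D0).
have [b Sb] := SubOpt_two_point_ge_half x01 y_gt.
have risk_ge : (((1 - p) ^+ n)%:E * subopt b (pihat D0) <= worst_risk eta pihat)%E.
  have pref_ge0 a : 0 <= bernoulli_pmf p a by exact/ltW/bernoulli_pmf_gt0.
  have SubOpt_ge0_pihat := fun D => SubOpt_ge0 (two_point_reward b) eta_gt0 p01 (pihat_dist D).
  apply: le_trans (Edata_dirac0_ge (two_point_reward b) pref_ge0 false SubOpt_ge0_pihat) _.
  apply: ereal_sup_ubound; exists (two_point_reward b), (bernoulli_pmf p), \d_(0 : R).
  by split=> //; exact: MAB2_two_point.
apply: le_trans risk_ge; rewrite pihatE.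
have -> : two_point_gap eta p y / 4 = 2^-1 * (two_point_gap eta p y / 2) by field.
by rewrite EFinM lee_pmul // lee_fin ?invr_ge0 // divr_ge0.
Qed.

End two_point.

Section gap_bounds.
Variables (R : realType) (eta p : R).

Lemma two_point_gap_small_eta : 0 < eta <= 16 -> 0 < p <= 1/32 ->
  3 * (p * eta) / 128 <= two_point_gap eta p (p + p * eta / 16).
Proof.
move=> /andP[eta_gt0 eta_le] /andP[p_gt0 p_small]; set t := p * eta / 16; set y := p + t.
have t_gt0 : 0 < t by rewrite divr_gt0 ?mulr_gt0.
have t_le : t <= p by rewrite /t ler_pdivrMr // ler_pM2l.
have yy : p / 2 <= y * (1 - y).
  have : p / 2 <= y / 2 by rewrite /y; lra.
  have : 1/2 <= 1 - y by rewrite /y; lra.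
  have : 0 <= y by rewrite /y; lra.
  nra.
have chi2E : eta^-1 * bernoulli_chi2 p y = t ^+ 2 / (eta * (y * (1 - y))).
  by rewrite /bernoulli_chi2 /y addrAC subrr add0r; field; rewrite !gt_eqF //; nra.
have : eta^-1 * bernoulli_chi2 p y <= t / 8.
  rewrite chi2E ler_pdivrMr; last by apply: mulr_gt0 => //; nra.
  rewrite /t; nra.
rewrite /two_point_gap /y addrAC subrr add0r /t; lra.
Qed.

Lemma two_point_gap_large_eta : 16 < eta -> 0 < p <= 1/32 ->
  3/32 <= two_point_gap eta p (p + 1/4).
Proof.
move=> eta_gt /andP[p_gt0 p_small]; set y := p + 1/4.
have yy : 1/8 <= y * (1 - y).
  have : 0 <= p * (1/2 - p) by rewrite mulr_ge0 ?ltW //; lra.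
  rewrite /y; nra.
have chi2E : eta^-1 * bernoulli_chi2 p y = 1 / (16 * eta * (y * (1 - y))).
  rewrite /bernoulli_chi2 /y addrAC subrr add0r; field.
  by apply/and3P; split; rewrite gt_eqF //; lra.
have : eta^-1 * bernoulli_chi2 p y <= 1/32.
  rewrite chi2E ler_pdivrMr; last by apply: mulr_gt0; nra.
  nra.
rewrite /two_point_gap /y addrAC subrr add0r; lra.
Qed.

End gap_bounds.

Theorem theoremE3 (R : realType) :
  exists c : R, 0 < c /\
  forall (n : nat), (16 < n)%N ->
  forall eta : R, 0 < eta ->
  forall pihat : n.-tuple (bool * R) -> bool -> R,
    (forall D, is_dist (pihat D)) ->
    (forall a : bool, measurable_fun setT (fun D => pihat D a)) ->
    ((c * Num.min (eta / n%:R) (1 / Num.sqrt n%:R))%:E <= worst_risk eta pihat)%E.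
Proof.
exists (1/512); split=> [|n n_gt16 eta eta_gt0 pihat pihat_dist _]; first lra.
set N : R := n%:R; set p := (2 * N)^-1.
have N_gt16 : 16 < N by rewrite ltr_nat.
have pN : p * N = 2^-1 by rewrite /p; field; lra.
have p_small : 0 < p <= 1/32 by rewrite invr_gt0 div1r lef_pV2 ?posrE; lra.
have p_gt0 : 0 < p by case/andP: p_small.
have p01 : 0 < p < 1 by case/andP: p_small => _ p1; apply/andP; split; lra.
have Pn : 2^-1 <= (1 - p) ^+ n.
  have := @bernoulli_ineq _ (- p) n; rewrite mulNrn -(mulr_natr p) -/N pN => ineq.
  by apply: le_trans (ineq _); lra.
set m := Num.min _ _.
have m_le_eta : m <= eta / N by rewrite ge_min lexx.
have m_le1 : m <= 1.
  have sqrtN_ge1 : 1 <= Num.sqrt N by rewrite -sqrtr1 ler_sqrt; lra.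
  have : 1 / Num.sqrt N <= 1 by rewrite div1r invf_le1 // (lt_le_trans ltr01).
  by rewrite ge_min => ->; rewrite orbT.
have [eta_le16|eta_gt16] := leP eta 16.
- have eta16 : 0 < eta <= 16 by apply/andP.
  have G_ge := two_point_gap_small_eta eta16 p_small.
  have p_eta_gt0 : 0 < p * eta by rewrite mulr_gt0.
  have p_eta_le : p * eta <= p * 16 by rewrite ler_pM2l.
  apply: le_trans (worst_risk_ge_two_point eta_gt0 p01 _ Pn _ pihat_dist).
  + have etaN : eta / N = 2 * (p * eta) by rewrite /p; field; lra.
    rewrite lee_fin; rewrite etaN in m_le_eta; lra.
  + apply/andP; split; lra.
  + lra.
- have G_ge := two_point_gap_large_eta eta_gt16 p_small.
  apply: le_trans (worst_risk_ge_two_point eta_gt0 p01 _ Pn _ pihat_dist).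
  + rewrite lee_fin; lra.
  + apply/andP; split; lra.
  + lra.
Qed.
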